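(* Let $D$ be an AV-domain with quotient field $K$ and let $L$ be a subfield of $K$. Then $D\cap L$ is an AV-domain. Moreover, if $M$ denotes the quotient field of $D\cap L$, then $\overline{D}\cap M$ is a valuation domain with quotient field $M$, and the integral closures of $D\cap L$ and of $D\cap M$ (in $M$) both equal $\overline{D}\cap M$.
   Context: An integral domain $D$ is an AV-domain if for all nonzero $a,b\in D$ there is a natural number $n$ with $a^n\mid b^n$ or $b^n\mid a^n$ in $D$. $\overline{D}$ denotes the integral closure of $D$ in $K$. *)

From mathcomp Require Import all_boot all_algebra.
Set Implicit Arguments. Unset Strict Implicit. Unset Printing Implicit Defensive.
Import GRing.Theory.
Local Open Scope ring_scope.

Section Defs.
Variable K : fieldType.

(* A is a subring (with 1) of K; being inside a field it is an integral domain *)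
Definition is_subring (A : K -> Prop) : Prop :=
  [/\ A 0, A 1, (forall x y, A x -> A y -> A (x - y)) &
      (forall x y, A x -> A y -> A (x * y))].

Definition is_subfield (F : K -> Prop) : Prop :=
  is_subring F /\ (forall x, F x -> x != 0 -> F x^-1).

Definition inter (A B : K -> Prop) : K -> Prop := fun x => A x /\ B x.

Definition dvd_in (A : K -> Prop) (a b : K) : Prop := exists2 c, A c & b = a * c.

Definition AV_domain (A : K -> Prop) : Prop :=
  forall a b, A a -> A b -> a != 0 -> b != 0 ->
    exists2 n : nat, (0 < n)%N &
      (dvd_in A (a ^+ n) (b ^+ n) \/ dvd_in A (b ^+ n) (a ^+ n)).

Definition quot_field (A : K -> Prop) : K -> Prop :=
  fun x => exists a b, [/\ A a, A b, b != 0 & x = a / b].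

Definition has_quot_field (A F : K -> Prop) : Prop :=
  forall x, F x <-> quot_field A x.

Definition integral_over (A : K -> Prop) (x : K) : Prop :=
  exists p : {poly K}, [/\ p \is monic, (forall i, A p`_i) & root p x].

Definition integral_closure_in (A F : K -> Prop) : K -> Prop :=
  fun x => F x /\ integral_over A x.

Definition valuation_domain (V : K -> Prop) : Prop :=
  is_subring V /\
  forall x, quot_field V x -> x != 0 -> V x \/ V x^-1.

End Defs.

(* For an AV-domain D with quotient field K, every nonzero x in K has x^n
   or x^-n in D for some n > 0.  An integral element whose inverse lies in a
   ring lies in that ring, so a nonzero x integral over D has a power x^n in
   D.  Hence for x in M either x or x^-1 is integral over D, and an x in M
   integral over D has a power in D \cap M, so it is integral over every ring
   between D \cap M and D.  The AV property passes to D \cap L because the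
   quotient of two elements of L stays in L. *)
From HB Require Import structures.
From mathcomp Require Import all_boot all_algebra ring.
From Stdlib Require Import ClassicalEpsilon.
Set Implicit Arguments.
Unset Strict Implicit.
Unset Printing Implicit Defensive.

Import GRing.Theory.
Local Open Scope ring_scope.

Section SubringAsSubtype.
Variables (K : fieldType) (A : K -> Prop).
Hypothesis A_subring : is_subring A.

(* [integralOver] needs the subring as a ring type of its own, hence a
   boolean membership test and a subtype. *)
Definition subring_mem (x : K) : bool :=
  if excluded_middle_informative (A x) then true else false.

Lemma subring_memP x : reflect (A x) (subring_mem x).
Proof. by rewrite /subring_mem; case: excluded_middle_informative; constructor. Qed.

Fact subring_mem_closed : subring_closed subring_mem.
Proof.
case: A_subring => A0 A1 AB AM; split; first exact/subring_memP.
  by move=> x y /subring_memP Ax /subring_memP Ay; apply/subring_memP/AB.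
by move=> x y /subring_memP Ax /subring_memP Ay; apply/subring_memP/AM.
Qed.

HB.instance Definition _ :=
  GRing.isSubringClosed.Build K subring_mem subring_mem_closed.

Record subring_type := SubringElt { subring_val : K; _ : subring_mem subring_val }.
HB.instance Definition _ := [isSub for subring_val].
HB.instance Definition _ := [Choice of subring_type by <:].
HB.instance Definition _ := [SubChoice_isSubComNzRing of subring_type by <:].

Lemma subringN x : A x -> A (- x).
Proof. by move=> Ax; rewrite -sub0r; case: A_subring => A0 _ AB _; apply: AB. Qed.

Lemma subringM x y : A x -> A y -> A (x * y).
Proof. by move=> /subring_memP Ax /subring_memP Ay; apply/subring_memP/rpredM. Qed.

Lemma subringX x n : A x -> A (x ^+ n).
Proof. by move=> /subring_memP Ax; apply/subring_memP/rpredX. Qed.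

Lemma subring_sum n (F : 'I_n -> K) : (forall i, A (F i)) -> A (\sum_(i < n) F i).
Proof. by move=> AF; apply/subring_memP/rpred_sum => i _; apply/subring_memP. Qed.

Lemma integral_overE x :
  integral_over A x <-> integralOver (val : {rmorphism subring_type -> K}) x.
Proof.
split=> [[p [mon_p Ap root_p]] | [q mon_q root_q]].
  pose q : {poly subring_type} := \poly_(i < size p) insubd 0 p`_i.
  have map_q : map_poly val q = p.
    apply/polyP => i; rewrite coef_map coef_poly.
    case: ltnP => [_ | le_p_i] /=; first by rewrite insubdK //; apply/subring_memP.
    by rewrite nth_default.
  exists q; last by rewrite map_q.
  rewrite monicE; apply/eqP/val_inj.
  by rewrite -lead_coef_map_inj ?map_q ?rmorph1 ?(monicP mon_p) //; apply: val_inj.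
exists (map_poly val q); split; rewrite ?monic_map //.
by move=> i; rewrite coef_map; apply/subring_memP/valP.
Qed.

Lemma integral_over_sub x y :
  integral_over A x -> integral_over A y -> integral_over A (x - y).
Proof.
by move=> /integral_overE Ix /integral_overE Iy; apply/integral_overE/integral_sub.
Qed.

Lemma integral_over_mul x y :
  integral_over A x -> integral_over A y -> integral_over A (x * y).
Proof.
by move=> /integral_overE Ix /integral_overE Iy; apply/integral_overE/integral_mul.
Qed.

End SubringAsSubtype.

Section Subrings.
Variable K : fieldType.
Implicit Types (A B F L : K -> Prop) (x y : K).

Lemma subring_inter A B : is_subring A -> is_subring B -> is_subring (inter A B).
Proof.
case=> A0 A1 AB AM [B0 B1 BB BM]; split=> //.
  by move=> x y [Ax Bx] [Ay By]; split; [apply: AB | apply: BB].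
by move=> x y [Ax Bx] [Ay By]; split; [apply: AM | apply: BM].
Qed.

Lemma integral_over_of_pow A x n :
  is_subring A -> (0 < n)%N -> A (x ^+ n) -> integral_over A x.
Proof.
case=> A0 A1 AB _ n_gt0 Axn; exists ('X^n - (x ^+ n)%:P); split.
- exact: monicXnsubC.
- by move=> i; rewrite coefB coefXn coefC; apply: AB; case: eqP.
- by rewrite /root !hornerE subrr.
Qed.

Lemma integral_over_mem A x : is_subring A -> A x -> integral_over A x.
Proof. by move=> A_sr Ax; apply: (integral_over_of_pow (n := 1)); rewrite ?expr1. Qed.

Lemma integral_over_pow A x n :
  is_subring A -> integral_over A x -> integral_over A (x ^+ n).
Proof.
move=> A_sr Ix; elim: n => [|n IHn]; last by rewrite exprS; apply: integral_over_mul.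
by rewrite expr0; apply: integral_over_mem; case: A_sr.
Qed.

Lemma sub_integral_over A B x :
  (forall y, A y -> B y) -> integral_over A x -> integral_over B x.
Proof. by move=> sAB [p [mon_p Ap root_p]]; exists p; split=> // i; apply: sAB. Qed.

Lemma integral_closure_subring A F :
  is_subring A -> is_subring F -> is_subring (integral_closure_in A F).
Proof.
move=> A_sr [F0 F1 FB FM].
have A0 : A 0 by case: A_sr.
have A1 : A 1 by case: A_sr.
split; try by split=> //; apply: integral_over_mem.
  by move=> x y [Fx Ix] [Fy Iy]; split; [apply: FB | apply: integral_over_sub].
by move=> x y [Fx Ix] [Fy Iy]; split; [apply: FM | apply: integral_over_mul].
Qed.

(* If [p] is monic of degree [k+1] with [p(y) = 0], then
   [y = y^(k+1) d^k = - \sum_(i <= k) p_i d^(k-i)] for [d = y^-1]. *)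
Lemma integral_mem_of_inv_mem A y :
  is_subring A -> integral_over A y -> y != 0 -> A y^-1 -> A y.
Proof.
move=> A_sr [p [mon_p Ap root_p]] y_neq0 Ayinv.
have [k size_p] : exists k, size p = k.+2.
  have := root_size_gt1 (monic_neq0 mon_p) root_p.
  by case: (size p) => [|[|k]] // _; exists k.
have lead_p : p`_k.+1 = 1 by rewrite -(monicP mon_p) lead_coefE size_p.
move/rootP: root_p; rewrite horner_coef size_p big_ord_recr /= lead_p mul1r.
move/eqP; rewrite addrC addr_eq0 => /eqP yk1E.
have -> : y = y ^+ k.+1 * y^-1 ^+ k by rewrite exprS -mulrA -exprMn mulfV // expr1n mulr1.
rewrite yk1E mulNr mulr_suml; apply: (subringN A_sr); apply: (subring_sum A_sr) => i.
have le_i_k : (i <= k)%N by rewrite -ltnS.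
have -> : y^-1 ^+ k = y^-1 ^+ (k - i) * y^-1 ^+ i by rewrite -exprD subnK.
rewrite -mulrA [y ^+ i * _]mulrC -mulrA -exprMn mulVf //.
by rewrite expr1n mulr1; apply: (subringM A_sr); [apply: Ap | apply: subringX].
Qed.

Lemma quot_field_mem A x : is_subring A -> A x -> quot_field A x.
Proof. by case=> _ A1 _ _ Ax; exists x, 1; split; rewrite ?oner_eq0 ?divr1. Qed.

Lemma sub_quot_field A B x :
  (forall y, A y -> B y) -> quot_field A x -> quot_field B x.
Proof. by move=> sAB [a [b [Aa Ab b_neq0 ->]]]; exists a, b; split=> //; apply: sAB. Qed.

Lemma quot_field_subfield A : is_subring A -> is_subfield (quot_field A).
Proof.
move=> A_sr; have [A0 A1 AB AM] := A_sr.
split; first split; try exact: quot_field_mem.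
- move=> _ _ [a [b [Aa Ab b_neq0 ->]]] [c [d [Ac Ad d_neq0 ->]]].
  exists (a * d - c * b), (b * d).
  split; [by apply: AB; apply: AM | exact: AM | exact: mulf_neq0 |].
  by field; rewrite b_neq0 d_neq0.
- move=> _ _ [a [b [Aa Ab b_neq0 ->]]] [c [d [Ac Ad d_neq0 ->]]].
  exists (a * c), (b * d).
  split; [exact: AM | exact: AM | exact: mulf_neq0 |].
  by field; rewrite b_neq0 d_neq0.
- move=> _ [a [b [Aa Ab b_neq0 ->]]] x_neq0.
  have a_neq0 : a != 0 by apply: contraNneq x_neq0 => ->; rewrite mul0r.
  by exists b, a; rewrite invf_div.
Qed.

Lemma subfield_quot_field A L x :
  is_subfield L -> (forall y, A y -> L y) -> quot_field A x -> L x.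
Proof.
move=> [[_ _ _ LM] Linv] sAL [a [b [Aa Ab b_neq0 ->]]].
by apply: LM; [apply: sAL | apply: Linv => //; apply: sAL].
Qed.

Lemma has_quot_field_between A B :
  is_subring A -> is_subring B -> (forall y, A y -> B y) ->
  (forall y, B y -> quot_field A y) -> has_quot_field B (quot_field A).
Proof.
move=> A_sr B_sr sAB sBQ x; split; first exact: sub_quot_field.
by apply: subfield_quot_field sBQ; apply: quot_field_subfield.
Qed.

Lemma dvd_in_inter A L a b :
  is_subfield L -> dvd_in A a b -> L a -> L b -> a != 0 -> dvd_in (inter A L) a b.
Proof.
move=> [[_ _ _ LM] Linv] [c Ac b_eq] La Lb a_neq0; exists c => //; split=> //.
have -> : c = b * a^-1 by rewrite b_eq mulrC mulKf.
by apply: LM => //; apply: Linv.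
Qed.

Lemma AV_domain_inter_subfield A L :
  is_subring A -> is_subfield L -> AV_domain A -> AV_domain (inter A L).
Proof.
move=> A_sr L_sf A_AV a b [Aa La] [Ab Lb] a_neq0 b_neq0.
have L_sr : is_subring L by case: L_sf.
have [n n_gt0 a_b_dvd] := A_AV a b Aa Ab a_neq0 b_neq0; exists n => //.
by case: a_b_dvd => [ab | ba]; [left | right];
  apply: dvd_in_inter; rewrite ?expf_neq0 //; apply: subringX.
Qed.

End Subrings.

Section AVDomain.
Variables (K : fieldType) (D : K -> Prop).
Hypotheses (D_sr : is_subring D) (D_quot : has_quot_field D (fun _ => True)).
Hypothesis D_AV : AV_domain D.

Let Dbar := integral_closure_in D (fun _ => True).

Lemma AV_domain_root_or_inv_root x : x != 0 ->
  exists2 n, (0 < n)%N & D (x ^+ n) \/ D (x^-1 ^+ n).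
Proof.
move=> x_neq0; have [a [b [Da Db b_neq0 x_eq]]] := proj1 (D_quot x) I.
have a_neq0 : a != 0 by apply: contraNneq x_neq0 => a0; rewrite x_eq a0 mul0r.
have [n n_gt0 [[c Dc bn_eq] | [c Dc an_eq]]] := D_AV Da Db a_neq0 b_neq0.
  exists n => //; right.
  by rewrite x_eq invf_div expr_div_n bn_eq mulrC mulKf ?expf_neq0.
exists n => //; left.
by rewrite x_eq expr_div_n an_eq mulrC mulKf ?expf_neq0.
Qed.

Lemma AV_domain_integral_root x : x != 0 -> integral_over D x ->
  exists2 n, (0 < n)%N & D (x ^+ n).
Proof.
move=> x_neq0 Ix; have [n n_gt0 Dxn] := AV_domain_root_or_inv_root x_neq0.
exists n => //; case: Dxn => // Dxn; apply: integral_mem_of_inv_mem => //.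
- exact: integral_over_pow.
- exact: expf_neq0.
- by rewrite -exprVn.
Qed.

Lemma valuation_domain_integral_closure_inter M :
  is_subfield M -> valuation_domain (inter Dbar M).
Proof.
move=> M_sf; have M_sr : is_subring M by case: M_sf.
have Dbar_sr : is_subring Dbar by apply: integral_closure_subring.
split; first exact: subring_inter.
move=> x Qx x_neq0; have Mx : M x by apply: (subfield_quot_field M_sf _ Qx) => y [].
have [n n_gt0 [Dxn | Dxn]] := AV_domain_root_or_inv_root x_neq0.
  by left; do !split=> //; apply: integral_over_of_pow Dxn.
right; split; last by case: M_sf => _; apply.
by split=> //; apply: integral_over_of_pow Dxn.
Qed.

Lemma integral_closure_in_between A M :
  is_subring A -> is_subring M -> (forall y, A y -> D y) ->
  (forall y, D y -> M y -> A y) ->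
  forall x, integral_closure_in A M x <-> inter Dbar M x.
Proof.
move=> A_sr M_sr sAD sDMA x; split=> [[Mx Ix] | [[_ Ix] Mx]].
  by do !split=> //; apply: sub_integral_over Ix.
split=> //; have [-> | x_neq0] := eqVneq x 0.
  by apply: integral_over_mem; case: A_sr.
have [n n_gt0 Dxn] := AV_domain_integral_root x_neq0 Ix.
apply: (integral_over_of_pow A_sr n_gt0); apply: sDMA => //; exact: subringX.
Qed.

End AVDomain.

Theorem theorem2 (K : fieldType) (D L : K -> Prop) :
  is_subring D -> has_quot_field D (fun _ => True) -> AV_domain D ->
  is_subfield L ->
  let DL := inter D L in
  let M := quot_field DL in
  let Dbar := integral_closure_in D (fun _ => True) in
  [/\ AV_domain DL,
      valuation_domain (inter Dbar M),
      has_quot_field (inter Dbar M) M,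
      (forall x, integral_closure_in DL M x <-> inter Dbar M x) &
      (forall x, integral_closure_in (inter D M) M x <-> inter Dbar M x)].
Proof.
move=> D_sr D_quot D_AV L_sf DL M Dbar.
have DL_sr : is_subring DL by apply: subring_inter; case: L_sf.
have M_sf : is_subfield M by apply: quot_field_subfield.
have M_sr : is_subring M by case: M_sf.
have Dbar_sr : is_subring Dbar by apply: integral_closure_subring.
have ML : forall y, M y -> L y by move=> y; apply: subfield_quot_field => // z [].
split.
- exact: AV_domain_inter_subfield.
- exact: valuation_domain_integral_closure_inter.
- apply: has_quot_field_between => //; first exact: subring_inter; last by move=> y [].
  move=> y DLy; split; last exact: quot_field_mem.
  by split=> //; apply: integral_over_mem => //; case: DLy.
- apply: integral_closure_in_between => //; first by move=> y [].
  by move=> y Dy /ML Ly; split.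
- apply: integral_closure_in_between => //; last by move=> y [].
  exact: subring_inter.
Qed.
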